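(* Let $n\ge1$, $\preceq$ an admissible order on $L([0,1])$ and $F\colon L([0,1])^2\to L([0,1])$, $G\colon L([0,1])^n\to L([0,1])$. (i) The IV Sugeno-like $FG$-functional $\mathbf S_m^{F,\vee}$ satisfies: (a) $\mathbf S_m^{F,\vee}\succeq\wedge$ for every IV fuzzy measure $m$ whenever $F(X,\mathbf1)\succeq X$ for all $X$ and $F$ is non-decreasing in the second variable; (a$^s$) $\mathbf S_m^{F,\vee}\succeq\wedge$ for every symmetric $m$ whenever $F(X,\mathbf1)\succeq X$ for all $X$; (b) $\mathbf S_m^{F,\vee}\preceq\vee$ for every $m$ whenever $F(X,\mathbf1)\preceq X$ for all $X$ and $F$ is non-decreasing in the second variable; (b$^s$) $\mathbf S_m^{F,\vee}\preceq\vee$ for every symmetric $m$ whenever $F(X,Y)\preceq X$ for all $X,Y$; (c) $\mathbf S_m^{F,\vee}$ is internal for every $m$ whenever $F(X,\mathbf1)=X$ for all $X$ and $F$ is non-decreasing in the second variable; (c$^s$) $\mathbf S_m^{F,\vee}$ is internal for every symmetric $m$ whenever $F(X,Y)\preceq X$ and $F(X,\mathbf1)=X$ for all $X,Y$. (ii) The functional $\mathbf S_m^{\wedge,G}$ satisfies: (a) $\mathbf S_m^{\wedge,G}\succeq\wedge$ for every $m$ whenever $G=f\circ\mathrm{Proj}_1$ or $G=f\circ\vee$ for some $f\colon L([0,1])\to L([0,1])$ with $f\succeq\mathrm{Id}$; (b) $\mathbf S_m^{\wedge,G}\preceq\vee$ for every $m$ whenever $G=f\circ\mathrm{Proj}_1$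 or $G=f\circ\vee$ with $f\preceq\mathrm{Id}$; (c) $\mathbf S_m^{\wedge,G}$ is internal for every $m$ whenever $G=\mathrm{Proj}_1$ or $G=\vee$. (iii) $\mathbf S_m^{\wedge,\vee}$ is internal for every $m$.
   Context: $N=\{1,\dots,n\}$. $L([0,1])=\{[a,b]:0\le a\le b\le1\}$, $\mathbf0=[0,0]$, $\mathbf1=[1,1]$. An admissible order $\preceq$ is a total order on $L([0,1])$ with $[a,b]\preceq[c,d]$ whenever $a\le c$, $b\le d$. $\vee,\wedge$ denote maximum and minimum w.r.t. $\preceq$; monotonicity is w.r.t. $\preceq$; $\mathrm{Proj}_1(X_1,\dots,X_n)=X_1$; $f\succeq\mathrm{Id}$ means $f(X)\succeq X$ for all $X$. $\mathbf S\succeq\wedge$ means $\mathbf S(X_1,\dots,X_n)\succeq\wedge(X_1,\dots,X_n)$ for all inputs; $\mathbf S\preceq\vee$ analogously; internal means both. An IV fuzzy measure w.r.t. $\preceq$ is $m\colon2^N\to L([0,1])$, $m(\emptyset)=\mathbf0$, $m(N)=\mathbf1$, $m(A)\preceq m(B)$ for $A\subseteq B$; symmetric if $m(A)=m(B)$ whenever $|A|=|B|$. For a permutation $\sigma$, $E_{\sigma(i)}=\{\sigma(i),\dots,\sigma(n)\}$. $\mathbf S_m^{F,G}(X_1,\dots,X_n)=G\big(F(X_{\sigma(1)},m(E_{\sigma(1)})),\dots,F(X_{\sigma(n)},m(E_{\sigma(n)}))\big)$ with $\sigma$ any permutation such that $X_{\sigma(1)}\preceq\dots\preceq X_{\sigma(n)}$;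 it is defined when this value does not depend on the choice of $\sigma$ for all inputs. *)

From Stdlib Require Import Reals.
From mathcomp Require Import all_boot perm.
Set Implicit Arguments. Unset Strict Implicit. Unset Printing Implicit Defensive.

(* L([0,1]) : closed subintervals [a,b] of [0,1] *)
Record Ival := mkIval { lo : R; hi : R;
  Ival_wf : Rle R0 lo /\ Rle lo hi /\ Rle hi R1 }.

Definition I0 : Ival := @mkIval R0 R0 (conj (Rle_refl R0) (conj (Rle_refl R0) Rle_0_1)).
Definition I1 : Ival := @mkIval R1 R1 (conj Rle_0_1 (conj (Rle_refl R1) (Rle_refl R1))).

Definition admissible (le : Ival -> Ival -> bool) : Prop :=
  [/\ (forall X, le X X),
      (forall X Y, le X Y -> le Y X -> X = Y),
      (forall X Y Z, le X Y -> le Y Z -> le X Z),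
      (forall X Y, le X Y || le Y X) &
      (forall X Y, Rle (lo X) (lo Y) -> Rle (hi X) (hi Y) -> le X Y)].

Definition max2 (le : Ival -> Ival -> bool) (X Y : Ival) : Ival := if le X Y then Y else X.
Definition min2 (le : Ival -> Ival -> bool) (X Y : Ival) : Ival := if le X Y then X else Y.

(* n-ary maximum / minimum w.r.t. le  (0 and 1 are the bottom and top of an admissible order) *)
Definition vee (le : Ival -> Ival -> bool) {n : nat} (X : 'I_n -> Ival) : Ival :=
  foldr (max2 le) I0 [seq X i | i <- enum 'I_n].
Definition wedge (le : Ival -> Ival -> bool) {n : nat} (X : 'I_n -> Ival) : Ival :=
  foldr (min2 le) I1 [seq X i | i <- enum 'I_n].

Definition proj1 {n : nat} (hn : (0 < n)%N) (X : 'I_n -> Ival) : Ival := X (Ordinal hn).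

Definition fuzzy_measure (le : Ival -> Ival -> bool) {n : nat} (m : {set 'I_n} -> Ival) : Prop :=
  [/\ m set0 = I0, m setT = I1 &
      (forall A B : {set 'I_n}, A \subset B -> le (m A) (m B))].
Definition symmetric_measure {n : nat} (m : {set 'I_n} -> Ival) : Prop :=
  forall A B : {set 'I_n}, #|A| = #|B| -> m A = m B.

Definition sorting (le : Ival -> Ival -> bool) {n : nat} (X : 'I_n -> Ival) (s : {perm 'I_n}) : Prop :=
  forall i j : 'I_n, (i <= j)%N -> le (X (s i)) (X (s j)).

Definition Eset {n : nat} (s : {perm 'I_n}) (i : 'I_n) : {set 'I_n} :=
  [set s k | k : 'I_n & (i <= k)%N].

(* value of S_m^{F,G}(X) computed with the permutation s *)
Definition Sval {n : nat} (m : {set 'I_n} -> Ival) (F : Ival -> Ival -> Ival)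
  (G : ('I_n -> Ival) -> Ival) (X : 'I_n -> Ival) (s : {perm 'I_n}) : Ival :=
  G (fun i => F (X (s i)) (m (Eset s i))).

(* S_m^{F,G} is defined: the value does not depend on the sorting permutation, for all inputs *)
Definition S_defined (le : Ival -> Ival -> bool) {n : nat} (m : {set 'I_n} -> Ival)
  (F : Ival -> Ival -> Ival) (G : ('I_n -> Ival) -> Ival) : Prop :=
  forall X s1 s2, sorting le X s1 -> sorting le X s2 -> Sval m F G X s1 = Sval m F G X s2.

Definition S_ge_wedge (le : Ival -> Ival -> bool) {n : nat} (m : {set 'I_n} -> Ival)
  (F : Ival -> Ival -> Ival) (G : ('I_n -> Ival) -> Ival) : Prop :=
  S_defined le m F G ->
  forall X s, sorting le X s -> le (wedge le X) (Sval m F G X s).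

Definition S_le_vee (le : Ival -> Ival -> bool) {n : nat} (m : {set 'I_n} -> Ival)
  (F : Ival -> Ival -> Ival) (G : ('I_n -> Ival) -> Ival) : Prop :=
  S_defined le m F G ->
  forall X s, sorting le X s -> le (Sval m F G X s) (vee le X).

Definition S_internal (le : Ival -> Ival -> bool) {n : nat} (m : {set 'I_n} -> Ival)
  (F : Ival -> Ival -> Ival) (G : ('I_n -> Ival) -> Ival) : Prop :=
  S_ge_wedge le m F G /\ S_le_vee le m F G.

Definition nondecr2 (le : Ival -> Ival -> bool) (F : Ival -> Ival -> Ival) : Prop :=
  forall X Y Z, le Y Z -> le (F X Y) (F X Z).

From Stdlib Require Import Reals Lra.
From mathcomp Require Import all_boot perm.

(* Since E_{σ(1)} = N, every IV fuzzy measure gives the first term of the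
   functional the weight m(N) = 1.  Hence if F(X,1) ⪰ X, the first term
   dominates X_{σ(1)} ⪰ ⋀X, and so does the ⋁ of all terms.  Dually, if
   F(X,Y) ⪯ X for all Y (which follows from F(X,1) ⪯ X when F is
   non-decreasing in Y), every term is below ⋁X.  For F = ∧ we have
   ∧(X,1) = X, so Proj_1 returns X_{σ(1)}, which lies between ⋀X and ⋁X;
   post-composing with f ⪰ Id (resp. f ⪯ Id) preserves the lower (resp. upper)
   bound.  None of these bounds uses that σ sorts X, that the functional is
   well defined, or that m is symmetric. *)

Set Implicit Arguments.
Unset Strict Implicit.

Lemma Eset_first n (hn : (0 < n)%N) (s : {perm 'I_n}) : Eset s (Ordinal hn) = setT.
Proof.
apply/setP => x; rewrite inE; apply/imsetP.
by exists ((s^-1)%g x); rewrite ?inE ?permKV.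
Qed.

Section AdmissibleOrder.

Variable le : Ival -> Ival -> bool.
Hypothesis adm : admissible le.

Lemma adm_refl X : le X X.
Proof. by case: adm. Qed.

Lemma adm_trans Y X Z : le X Y -> le Y Z -> le X Z.
Proof. by case: adm => _ _ le_trans _ _; apply: le_trans. Qed.

Lemma adm_total X Y : le X Y || le Y X.
Proof. by case: adm. Qed.

Lemma le_I1 X : le X I1.
Proof. by case: adm => _ _ _ _ -> //=; case: X => a b /=; lra. Qed.

Lemma I0_le X : le I0 X.
Proof. by case: adm => _ _ _ _ -> //=; case: X => a b /=; lra. Qed.

Lemma le_max2l X Y : le X (max2 le X Y).
Proof. by rewrite /max2; case: ifP => // _; apply: adm_refl. Qed.

Lemma le_max2r X Y : le Y (max2 le X Y).
Proof.
rewrite /max2; case: ifP => [_|XY]; first exact: adm_refl.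
by have := adm_total X Y; rewrite XY.
Qed.

Lemma max2_le X Y Z : le X Z -> le Y Z -> le (max2 le X Y) Z.
Proof. by rewrite /max2; case: ifP. Qed.

Lemma min2_lel X Y : le (min2 le X Y) X.
Proof.
rewrite /min2; case: ifP => [_|XY]; first exact: adm_refl.
by have := adm_total X Y; rewrite XY.
Qed.

Lemma min2_ler X Y : le (min2 le X Y) Y.
Proof. by rewrite /min2; case: ifP => // _; apply: adm_refl. Qed.

Lemma min2_I1 X : min2 le X I1 = X.
Proof. by rewrite /min2 le_I1. Qed.

Lemma le_vee n (X : 'I_n -> Ival) i : le (X i) (vee le X).
Proof.
rewrite /vee; have : i \in enum 'I_n by rewrite mem_enum.
elim: (enum 'I_n) => //= j s IHs; rewrite in_cons => /predU1P [<-|/IHs iXs].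
  exact: le_max2l.
exact: adm_trans iXs (le_max2r _ _).
Qed.

Lemma vee_le n (X : 'I_n -> Ival) Z : (forall i, le (X i) Z) -> le (vee le X) Z.
Proof.
move=> XZ; rewrite /vee; elim: (enum 'I_n) => /= [|j s IHs]; first exact: I0_le.
exact: max2_le.
Qed.

Lemma wedge_le n (X : 'I_n -> Ival) i : le (wedge le X) (X i).
Proof.
rewrite /wedge; have : i \in enum 'I_n by rewrite mem_enum.
elim: (enum 'I_n) => //= j s IHs; rewrite in_cons => /predU1P [<-|/IHs sXi].
  exact: min2_lel.
exact: adm_trans (min2_ler _ _) sXi.
Qed.

Lemma le_first_of_nondecr2 (F : Ival -> Ival -> Ival) :
  (forall X, le (F X I1) X) -> nondecr2 le F -> forall X Y, le (F X Y) X.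
Proof. by move=> F1 Fmono X Y; apply: adm_trans (Fmono _ _ _ (le_I1 Y)) (F1 X). Qed.

Lemma Sval_vee_le_vee n (m : {set 'I_n} -> Ival) F :
  (forall X Y, le (F X Y) X) -> forall X s, le (Sval m F (vee le) X s) (vee le X).
Proof.
move=> Fle X s; apply: vee_le => // i.
exact: adm_trans (Fle _ _) (le_vee _ _).
Qed.

Lemma S_ge_wedgeW n (m : {set 'I_n} -> Ival) F G :
  (forall X s, le (wedge le X) (Sval m F G X s)) -> S_ge_wedge le m F G.
Proof. by move=> lowG _ X s _; apply: lowG. Qed.

Lemma S_le_veeW n (m : {set 'I_n} -> Ival) F G :
  (forall X s, le (Sval m F G X s) (vee le X)) -> S_le_vee le m F G.
Proof. by move=> upG _ X s _; apply: upG. Qed.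

Section SugenoLikeBounds.

Variables (n : nat) (hn : (0 < n)%N) (m : {set 'I_n} -> Ival).
Hypothesis m_measure : fuzzy_measure le m.

Lemma m_Eset_first (s : {perm 'I_n}) : m (Eset s (Ordinal hn)) = I1.
Proof. by case: m_measure => _ mT _; rewrite Eset_first. Qed.

Lemma wedge_le_Sval_vee F :
  (forall X, le X (F X I1)) -> forall X s, le (wedge le X) (Sval m F (vee le) X s).
Proof.
move=> F1 X s; apply: adm_trans (wedge_le X (s (Ordinal hn))) _.
apply: adm_trans (F1 _) _.
by have := le_vee (fun i => F (X (s i)) (m (Eset s i))) (Ordinal hn);
  rewrite /= m_Eset_first.
Qed.

Lemma Sval_min2_proj1 X s : Sval m (min2 le) (proj1 hn) X s = X (s (Ordinal hn)).
Proof. by rewrite /Sval /proj1 m_Eset_first min2_I1. Qed.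

Lemma Sval_min2_internal G :
  G = proj1 hn \/ G = vee le ->
  forall X s, le (wedge le X) (Sval m (min2 le) G X s) /\
              le (Sval m (min2 le) G X s) (vee le X).
Proof.
move=> [->|->] X s.
  by rewrite Sval_min2_proj1; split; [apply: wedge_le | apply: le_vee].
split; first by apply: wedge_le_Sval_vee => Y; rewrite min2_I1 ?adm_refl.
exact: (Sval_vee_le_vee m min2_lel).
Qed.

Lemma Sval_min2_comp G (f : Ival -> Ival) :
  G = (fun X => f (proj1 hn X)) \/ G = (fun X => f (vee le X)) ->
  exists2 G0, G0 = proj1 hn \/ G0 = vee le &
              forall X s, Sval m (min2 le) G X s = f (Sval m (min2 le) G0 X s).
Proof. by case=> ->; [exists (proj1 hn); [left|] | exists (vee le); [right|]]. Qed.

Lemma S_internal_min2 G : G = proj1 hn \/ G = vee le -> S_internal le m (min2 le) G.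
Proof.
by move=> hG; split; [apply: S_ge_wedgeW | apply: S_le_veeW] => X s;
  have [] := Sval_min2_internal hG X s.
Qed.

Lemma S_ge_wedge_min2_comp G (f : Ival -> Ival) :
  (forall X, le X (f X)) ->
  G = (fun X => f (proj1 hn X)) \/ G = (fun X => f (vee le X)) ->
  S_ge_wedge le m (min2 le) G.
Proof.
move=> f_ge hG; apply: S_ge_wedgeW => X s.
have [G0 hG0 ->] := Sval_min2_comp hG.
by have [low _] := Sval_min2_internal hG0 X s; apply: adm_trans low (f_ge _).
Qed.

Lemma S_le_vee_min2_comp G (f : Ival -> Ival) :
  (forall X, le (f X) X) ->
  G = (fun X => f (proj1 hn X)) \/ G = (fun X => f (vee le X)) ->
  S_le_vee le m (min2 le) G.
Proof.
move=> f_le hG; apply: S_le_veeW => X s.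
have [G0 hG0 ->] := Sval_min2_comp hG.
by have [_ up] := Sval_min2_internal hG0 X s; apply: adm_trans (f_le _) up.
Qed.

End SugenoLikeBounds.

End AdmissibleOrder.

Theorem corollary3 (n : nat) (hn : (0 < n)%N) (le : Ival -> Ival -> bool)
  (F : Ival -> Ival -> Ival) (G : ('I_n -> Ival) -> Ival) :
  admissible le ->
  (* (i) S_m^{F, vee} *)
  ( (* (a) *)
    ((forall X, le X (F X I1)) -> nondecr2 le F ->
       forall m : {set 'I_n} -> Ival, fuzzy_measure le m -> S_ge_wedge le m F (vee le))
    /\ (* (a^s) *)
    ((forall X, le X (F X I1)) ->
       forall m : {set 'I_n} -> Ival, fuzzy_measure le m -> symmetric_measure m ->
       S_ge_wedge le m F (vee le))
    /\ (* (b) *)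
    ((forall X, le (F X I1) X) -> nondecr2 le F ->
       forall m : {set 'I_n} -> Ival, fuzzy_measure le m -> S_le_vee le m F (vee le))
    /\ (* (b^s) *)
    ((forall X Y, le (F X Y) X) ->
       forall m : {set 'I_n} -> Ival, fuzzy_measure le m -> symmetric_measure m ->
       S_le_vee le m F (vee le))
    /\ (* (c) *)
    ((forall X, F X I1 = X) -> nondecr2 le F ->
       forall m : {set 'I_n} -> Ival, fuzzy_measure le m -> S_internal le m F (vee le))
    /\ (* (c^s) *)
    ((forall X Y, le (F X Y) X) -> (forall X, F X I1 = X) ->
       forall m : {set 'I_n} -> Ival, fuzzy_measure le m -> symmetric_measure m ->
       S_internal le m F (vee le)) )
  /\
  (* (ii) S_m^{wedge, G} *)
  ( (* (a) *)
    (forall f : Ival -> Ival, (forall X, le X (f X)) ->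
       (G = (fun X => f (proj1 hn X)) \/ G = (fun X => f (vee le X))) ->
       forall m : {set 'I_n} -> Ival, fuzzy_measure le m -> S_ge_wedge le m (min2 le) G)
    /\ (* (b) *)
    (forall f : Ival -> Ival, (forall X, le (f X) X) ->
       (G = (fun X => f (proj1 hn X)) \/ G = (fun X => f (vee le X))) ->
       forall m : {set 'I_n} -> Ival, fuzzy_measure le m -> S_le_vee le m (min2 le) G)
    /\ (* (c) *)
    ((G = proj1 hn \/ G = vee le) ->
       forall m : {set 'I_n} -> Ival, fuzzy_measure le m -> S_internal le m (min2 le) G) )
  /\
  (* (iii) S_m^{wedge, vee} *)
  (forall m : {set 'I_n} -> Ival, fuzzy_measure le m -> S_internal le m (min2 le) (vee le)).
Proof.
move=> adm.
have lowF (m : {set 'I_n} -> Ival) :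
    fuzzy_measure le m -> (forall X, le X (F X I1)) -> S_ge_wedge le m F (vee le).
  by move=> mm F1; exact: S_ge_wedgeW (wedge_le_Sval_vee adm hn mm F1).
have upF (m : {set 'I_n} -> Ival) : (forall X Y, le (F X Y) X) -> S_le_vee le m F (vee le).
  by move=> Fle; exact: S_le_veeW (Sval_vee_le_vee adm m Fle).
have F1_ge : (forall X, F X I1 = X) -> forall X, le X (F X I1).
  by move=> F1 X; rewrite F1 adm_refl.
have F1_le : (forall X, F X I1 = X) -> forall X, le (F X I1) X.
  by move=> F1 X; rewrite F1 adm_refl.
split; [|split; last by move=> m mm; exact: (S_internal_min2 adm (hn := hn) mm (or_intror erefl))].
- split; first by move=> F1 _ m mm; apply: lowF.
  split; first by move=> F1 m mm _; apply: lowF.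
  split; first by move=> F1 Fmono m _; exact: upF (le_first_of_nondecr2 adm F1 Fmono).
  split; first by move=> Fle m _ _; apply: upF.
  split; first by move=> F1 Fmono m mm; split;
    [apply/lowF/F1_ge | exact: upF (le_first_of_nondecr2 adm (F1_le F1) Fmono)].
  by move=> Fle F1 m mm _; split; [apply/lowF/F1_ge | apply: upF].
- split; first by move=> f f_ge hG m mm; exact: (S_ge_wedge_min2_comp adm mm f_ge hG).
  split; first by move=> f f_le hG m mm; exact: (S_le_vee_min2_comp adm mm f_le hG).
  by move=> hG m mm; exact: (S_internal_min2 adm mm hG).
Qed.
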